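(* Let $\gamma_a,\gamma_s>0$, $\sigma_B>0$, $q>0$, $\varepsilon_a>2$, and let $\beta_s$ be the piecewise linear coalbedo described in the context. Let $(T_a,T_s)$ be the maximal solution, defined on $[0,\tau^+)$, of \[ \begin{cases} \gamma_a T_a'=\varepsilon_a\sigma_B|T_s|^3T_s-2\varepsilon_a\sigma_B|T_a|^3T_a,\\ \gamma_s T_s'=-\sigma_B|T_s|^3T_s+\varepsilon_a\sigma_B|T_a|^3T_a+q\beta_s(T_s),\\ T_a(0)=T_a^{(0)}\ge0,\quad T_s(0)=T_s^{(0)}\ge0. \end{cases} \] Let \[ \mathcal E=\Big\{(T_a,T_s)\in[0,\infty)^2:\ \sigma_B T_s^4-q\beta_s(T_s)<\varepsilon_a\sigma_B T_a^4<\tfrac12\varepsilon_a\sigma_B T_s^4\Big\}, \] and let $\mu_*$ be the unique number in $(2^{1/4},\varepsilon_a^{1/4})$ satisfying $\frac{\gamma_s}{\gamma_a}\mu_*=\frac{\varepsilon_a-\mu_*^4}{\varepsilon_a(\mu_*^4-2)}$. Let $\tau_0\in[0,\tau^+)$ be any time such that $(T_a(\tau_0),T_s(\tau_0))\in\mathcal E$. Then there exists $\mu\in(2^{1/4},\mu_* )$ such that $T_s(t)\ge\mu T_a(t)$ for all $t\in[\tau_0,\tau^+)$.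
   Context: The coalbedo is $\beta_s(T)=\beta_{s,-}$ for $T\le T_{s,-}$, $\beta_s(T)=\beta_{s,-}+(\beta_{s,+}-\beta_{s,-})\frac{T-T_{s,-}}{T_{s,+}-T_{s,-}}$ for $T\in[T_{s,-},T_{s,+}]$, and $\beta_s(T)=\beta_{s,+}$ for $T\ge T_{s,+}$, where $T_{s,+}>T_{s,-}>0$ and $\beta_{s,+}>\beta_{s,-}>0$. *)

From Stdlib Require Import Reals Lra.
From Coquelicot Require Import Coquelicot.
Open Scope R_scope.

(* Piecewise linear coalbedo beta_s with parameters
   T_{s,-} = Tm, T_{s,+} = Tp, beta_{s,-} = bm, beta_{s,+} = bp. *)
Definition coalbedo (Tm Tp bm bp : R) (T : R) : R :=
  if Rle_dec T Tm then bm
  else if Rle_dec Tp T then bp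
  else bm + (bp - bm) * ((T - Tm) / (Tp - Tm)).

Definition rhs_a (eps sig : R) (Ta Ts : R) : R :=
  eps * sig * (Rabs Ts ^ 3 * Ts) - 2 * eps * sig * (Rabs Ta ^ 3 * Ta).

Definition rhs_s (eps sig q : R) (beta : R -> R) (Ta Ts : R) : R :=
  - sig * (Rabs Ts ^ 3 * Ts) + eps * sig * (Rabs Ta ^ 3 * Ta) + q * beta Ts.

Definition is_solution (ga gs eps sig q : R) (beta : R -> R) (Ta0 Ts0 : R)
    (tau : Rbar) (Ta Ts : R -> R) : Prop :=
  Ta 0 = Ta0 /\ Ts 0 = Ts0 /\
  filterlim Ta (at_right 0) (locally (Ta 0)) /\
  filterlim Ts (at_right 0) (locally (Ts 0)) /\
  (forall t : R, 0 < t -> Rbar_lt t tau ->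
     is_derive Ta t (rhs_a eps sig (Ta t) (Ts t) / ga) /\
     is_derive Ts t (rhs_s eps sig q beta (Ta t) (Ts t) / gs)).

Definition is_maximal_solution (ga gs eps sig q : R) (beta : R -> R)
    (Ta0 Ts0 : R) (tau : Rbar) (Ta Ts : R -> R) : Prop :=
  Rbar_lt 0 tau /\
  is_solution ga gs eps sig q beta Ta0 Ts0 tau Ta Ts /\
  (forall (tau' : Rbar) (Ta' Ts' : R -> R),
     Rbar_lt tau tau' ->
     is_solution ga gs eps sig q beta Ta0 Ts0 tau' Ta' Ts' ->
     ~ (forall t : R, 0 <= t -> Rbar_lt t tau -> Ta' t = Ta t /\ Ts' t = Ts t)).

Definition in_E (eps sig q : R) (beta : R -> R) (Ta Ts : R) : Prop :=
  0 <= Ta /\ 0 <= Ts /\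
  sig * Ts ^ 4 - q * beta Ts < eps * sig * Ta ^ 4 /\
  eps * sig * Ta ^ 4 < / 2 * eps * sig * Ts ^ 4.

From Stdlib Require Import Reals Lra Lia List Classical.
From Coquelicot Require Import Coquelicot.
Import ListNotations.
Open Scope R_scope.

(* For [mu] slightly above [2^(1/4)] the sector [Ts >= mu Ta >= 0] is forward
   invariant.  On its edge [Ts = mu Ta] the derivative of [Ts - mu Ta] is a positive
   multiple of [sig Ta^4 (ga (eps - mu^4) - gs mu eps (mu^4 - 2)) + ga q beta(Ts)];
   the bracket vanishes at [mu = mu_*] and is positive for [2^(1/4) < mu < mu_*], so
   the vector field points into the sector.  A state of E satisfies
   [Ts^4 > 2 Ta^4], hence lies strictly inside such a sector for some [mu].
   Invariance is a barrier argument with the three barriers [Ts - mu Ta], [Ts] and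
   [Ta + eta]: a barrier can only be reached with nonnegative values of the others,
   and there its derivative is positive (for [Ts = 0] because the albedo term
   [q beta(0)] dominates [eps sig Ta^4 <= eps sig eta^4]). *)

Lemma real_induction (P : R -> Prop) (a b : R) :
  P a ->
  (forall t, a <= t < b -> (forall s, a <= s <= t -> P s) -> at_right t P) ->
  (forall t, a < t <= b -> (forall s, a <= s < t -> P s) -> P t) ->
  forall t, a <= t <= b -> P t.
Proof.
  intros Pa Hopen Hclosed t Ht.
  set (S x := a <= x <= b /\ forall s, a <= s <= x -> P s).
  assert (Sa : S a) by (split; [lra | intros s Hs; replace s with a by lra; exact Pa]).
  destruct (completeness S) as [c [Hub Hlub]].
  { exists b. intros x [Hx _]. lra. }
  { exists a. exact Sa. }
  assert (Hac : a <= c) by exact (Hub a Sa).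
  assert (Hcb : c <= b) by (apply Hlub; intros x [Hx _]; lra).
  assert (Hbelow : forall s, a <= s < c -> P s).
  { intros s Hs. apply NNPP. intros HnP.
    enough (c <= s) by lra.
    apply Hlub. intros x [_ HPx]. destruct (Rle_lt_dec x s) as [|Hsx]; [assumption|].
    exfalso. apply HnP, HPx. lra. }
  assert (Hupto : forall s, a <= s <= c -> P s).
  { intros s Hs. destruct (Rlt_le_dec s c); [apply Hbelow; lra|].
    replace s with c by lra. destruct (Req_dec a c) as [<-|]; [exact Pa|].
    apply Hclosed; [lra | exact Hbelow]. }
  destruct (Rlt_le_dec c b) as [Hcb'|]; [|apply Hupto; lra].
  exfalso.
  destruct (Hopen c (conj Hac Hcb') Hupto) as [d Hd].
  set (x := Rmin (c + d / 2) b).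
  assert (Hcx : c < x) by (apply Rmin_glb_lt; [pose proof (cond_pos d)|]; lra).
  assert (Hxd : x <= c + d / 2) by apply Rmin_l.
  enough (HSx : S x) by (pose proof (Hub x HSx); lra).
  split; [split; [lra | apply Rmin_r]|].
  intros s Hs. destruct (Rle_lt_dec s c); [apply Hupto; lra|].
  apply Hd; [|lra].
  change (Rabs (s - c) < d). rewrite Rabs_right; lra.
Qed.

Lemma filter_forall_In {A T : Type} {F : (T -> Prop) -> Prop} {FF : Filter F}
    (l : list A) (Q : A -> T -> Prop) :
  (forall x, In x l -> F (Q x)) -> F (fun y => forall x, In x l -> Q x y).
Proof.
  induction l as [|x0 l IH]; intros Hl.
  - apply filter_forall. intros y x [].
  - apply (filter_imp (fun y => Q x0 y /\ forall x, In x l -> Q x y)).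
    + intros y [Hx0 Hxs] x [<-|Hx]; auto.
    + apply filter_and; [apply Hl; left; reflexivity|].
      apply IH. intros x Hx. apply Hl. right. exact Hx.
Qed.

Lemma is_derive_pos_at_left (h : R -> R) (t l : R) :
  is_derive h t l -> 0 < l -> at_left t (fun y => h y < h t).
Proof.
  intros Hd Hl. apply is_derive_Reals in Hd.
  destruct (Hd l Hl) as [d Hq].
  pose proof (cond_pos d).
  apply (locally_interval _ t (t - d) (t + d)); simpl; [lra | lra |].
  intros y Hy1 Hy2 Hyt.
  assert (Hquot : 0 < (h y - h t) / (y - t)).
  { specialize (Hq (y - t) ltac:(lra) ltac:(rewrite Rabs_left; lra)).
    replace (t + (y - t)) with y in Hq by ring.
    apply Rabs_def2 in Hq. lra. }
  assert (h y - h t = (h y - h t) / (y - t) * (y - t)) by (field; lra).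
  nra.
Qed.

Lemma is_derive_continuous_within (h : R -> R) (t l : R) (D : R -> Type) :
  is_derive h t l -> filterlim h (within D (locally t)) (locally (h t)).
Proof.
  intros Hd. apply (filterlim_filter_le_1 (F := locally t)); [apply filter_le_within|].
  apply (ex_derive_continuous (K := R_AbsRing) (V := R_NormedModule)).
  exists l. exact Hd.
Qed.

Lemma barrier_invariance (l : list ((R -> R) * (R -> R))) (t0 t1 : R) :
  (forall g dg, In (g, dg) l -> 0 < g t0 /\ filterlim g (at_right t0) (locally (g t0))) ->
  (forall g dg t, In (g, dg) l -> t0 < t <= t1 -> is_derive g t (dg t)) ->
  (forall t, t0 < t <= t1 -> (forall g dg, In (g, dg) l -> 0 <= g t) ->
     forall g dg, In (g, dg) l -> g t = 0 -> 0 < dg t) ->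
  forall t, t0 <= t <= t1 -> forall g dg, In (g, dg) l -> 0 < g t.
Proof.
  intros Hinit Hder Hbarrier.
  apply (real_induction (fun t => forall g dg, In (g, dg) l -> 0 < g t)).
  - intros g dg Hin. apply (Hinit g dg Hin).
  - intros t Ht Hpos.
    apply (filter_imp (fun y => forall p, In p l -> 0 < fst p y)).
    { intros y Hy g dg Hin. exact (Hy (g, dg) Hin). }
    apply filter_forall_In. intros [g dg] Hin. simpl.
    assert (Hlim : filterlim g (at_right t) (locally (g t))).
    { destruct (Req_dec t t0) as [->|]; [apply (Hinit g dg Hin)|].
      apply (is_derive_continuous_within g t (dg t)), (Hder g dg t Hin). lra. }
    apply Hlim, open_gt. exact (Hpos t ltac:(lra) g dg Hin).
  - intros t Ht Hpos.
    assert (Hleft : forall g dg, In (g, dg) l -> at_left t (fun y => 0 < g y)).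
    { intros g dg Hin. apply (locally_interval _ t t0 p_infty); simpl; [lra | exact I |].
      intros y Hy _ Hyt. exact (Hpos y ltac:(lra) g dg Hin). }
    assert (Hnonneg : forall g dg, In (g, dg) l -> 0 <= g t).
    { intros g dg Hin.
      apply (closed_filterlim_loc
               (FF := Proper_StrongProper _ (at_left_proper_filter t)) g (fun z => 0 <= z)).
      - apply (is_derive_continuous_within g t (dg t)), (Hder g dg t Hin). lra.
      - apply (filter_imp (fun y => 0 < g y)); [intros; lra | exact (Hleft g dg Hin)].
      - apply closed_ge. }
    intros g dg Hin.
    destruct (Req_dec (g t) 0) as [Hzero|]; [exfalso | pose proof (Hnonneg g dg Hin); lra].
    apply (filter_not_empty (ProperFilter' := Proper_StrongProper _ (at_left_proper_filter t))).
    apply (filter_imp (fun y => 0 < g y /\ g y < g t)); [intros y; lra|].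
    apply filter_and; [exact (Hleft g dg Hin)|].
    apply (is_derive_pos_at_left g t (dg t)).
    + apply (Hder g dg t Hin). lra.
    + exact (Hbarrier t Ht Hnonneg g dg Hin Hzero).
Qed.

Lemma filterlim_Rplus {T : Type} {F : (T -> Prop) -> Prop} {FF : Filter F}
    (f g : T -> R) (x y : R) :
  filterlim f F (locally x) -> filterlim g F (locally y) ->
  filterlim (fun u => f u + g u) F (locally (x + y)).
Proof. intros Hf Hg. exact (filterlim_comp_2 f g plus Hf Hg (filterlim_plus x y)). Qed.

Lemma filterlim_Rminus_scal {T : Type} {F : (T -> Prop) -> Prop} {FF : Filter F}
    (f g : T -> R) (x y a : R) :
  filterlim f F (locally x) -> filterlim g F (locally y) ->
  filterlim (fun u => f u - a * g u) F (locally (x - a * y)).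
Proof.
  intros Hf Hg. apply filterlim_Rplus; [exact Hf|].
  apply (filterlim_comp _ _ _ g (fun z => opp (scal a z)) F (locally y)); [exact Hg|].
  apply (filterlim_comp _ _ _ (scal a) opp _ (locally (scal a y))).
  - exact (filterlim_scal_r (K := R_AbsRing) (V := R_NormedModule) a y).
  - exact (filterlim_opp (K := R_AbsRing) (V := R_NormedModule) _).
Qed.

Lemma pow_lt_compat_l (x y : R) (n : nat) : 0 <= x < y -> (0 < n)%nat -> x ^ n < y ^ n.
Proof.
  intros [Hx Hxy] Hn. induction n as [|[|n] IH]; [lia | simpl; lra |].
  assert (IH' : x ^ S n < y ^ S n) by (apply IH; lia).
  pose proof (pow_le x (S n) Hx).
  change (x * x ^ S n < y * y ^ S n). nra.
Qed.

Lemma pow_lt_reg_l (x y : R) (n : nat) : 0 <= y -> x ^ n < y ^ n -> x < y.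
Proof.
  intros Hy Hpow. destruct (Rlt_le_dec x y) as [|Hyx]; [assumption|].
  pose proof (pow_incr y x n (conj Hy Hyx)). lra.
Qed.

Lemma Rpower_inv4_pow4 (x : R) : 0 < x -> Rpower x (/ 4) ^ 4 = x.
Proof.
  intros Hx. rewrite <- Rpower_pow by apply exp_pos.
  rewrite Rpower_mult. replace (/ 4 * INR 4) with 1 by (simpl; field).
  apply Rpower_1, Hx.
Qed.

Lemma exists_slope_between (r m a s : R) :
  0 <= a -> r * a < s -> r < m -> exists mu, r < mu < m /\ mu * a < s.
Proof.
  intros Ha Hs Hm.
  set (w := (s - r * a) / (2 * (a + 1))).
  assert (Hw : w * (2 * (a + 1)) = s - r * a) by (unfold w; field; lra).
  assert (Hw0 : 0 < w) by (unfold w; apply Rdiv_lt_0_compat; lra).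
  set (d := Rmin ((m - r) / 2) w).
  assert (Hd1 : d <= (m - r) / 2) by apply Rmin_l.
  assert (Hd2 : d <= w) by apply Rmin_r.
  assert (Hd0 : 0 < d) by (apply Rmin_glb_lt; lra).
  exists (r + d). split; [lra|].
  assert (d * a <= w * a) by (apply Rmult_le_compat_r; lra).
  nra.
Qed.

Lemma exists_small_pow4 (c d : R) : 0 < c -> 0 < d -> exists x, 0 < x /\ c * x ^ 4 < d.
Proof.
  intros Hc Hd.
  set (x := Rmin 1 (d / (2 * c))).
  assert (Hx1 : x <= 1) by apply Rmin_l.
  assert (Hx2 : x <= d / (2 * c)) by apply Rmin_r.
  assert (Hcx : c * x <= d / 2).
  { apply (Rmult_le_compat_l c) in Hx2; [|lra].
    replace (c * (d / (2 * c))) with (d / 2) in Hx2 by (field; lra). exact Hx2. }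
  assert (Hx0 : 0 < x) by (apply Rmin_glb_lt; [lra | apply Rdiv_lt_0_compat; lra]).
  exists x. split; [exact Hx0|].
  assert (x ^ 4 <= x).
  { assert (x * x <= 1) by nra. assert (x * x * x <= 1) by nra. simpl. nra. }
  nra.
Qed.

Lemma signed_pow4_nonneg (x : R) : 0 <= x -> Rabs x ^ 3 * x = x ^ 4.
Proof. intros Hx. rewrite Rabs_pos_eq by exact Hx. ring. Qed.

Lemma signed_pow4_nonpos (x : R) : x <= 0 -> Rabs x ^ 3 * x = - x ^ 4.
Proof. intros Hx. rewrite Rabs_left1 by exact Hx. ring. Qed.

Lemma coalbedo_ge_min (Tm Tp bm bp T : R) :
  Tm < Tp -> bm <= bp -> bm <= coalbedo Tm Tp bm bp T.
Proof.
  intros HT Hb. unfold coalbedo.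
  destruct (Rle_dec T Tm); [lra|]. destruct (Rle_dec Tp T); [lra|].
  assert (0 <= (T - Tm) / (Tp - Tm)) by (apply Rdiv_le_0_compat; lra).
  nra.
Qed.

Lemma mu_star_gap (ga gs eps mu mus : R) :
  0 < ga -> 0 < gs -> 0 < eps -> 0 < mu -> mu < mus -> 2 < mu ^ 4 ->
  gs / ga * mus = (eps - mus ^ 4) / (eps * (mus ^ 4 - 2)) ->
  gs * mu * eps * (mu ^ 4 - 2) < ga * (eps - mu ^ 4).
Proof.
  intros Hga Hgs Heps Hmu Hmus HK Hdef.
  assert (HKM : mu ^ 4 < mus ^ 4) by (apply pow_lt_compat_l; [lra | lia]).
  set (K := mu ^ 4) in *. set (M := mus ^ 4) in *.
  assert (Hstar : gs * mus * eps * (M - 2) = ga * (eps - M)).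
  { replace (gs * mus * eps * (M - 2)) with (ga * (eps * (M - 2)) * (gs / ga * mus))
      by (field; lra).
    rewrite Hdef. field. split; lra. }
  assert (mu * (K - 2) < mus * (M - 2)) by nra.
  assert (gs * eps * (mu * (K - 2)) < gs * eps * (mus * (M - 2))).
  { apply Rmult_lt_compat_l; [nra | assumption]. }
  nra.
Qed.

Lemma rhs_ray_pos (ga gs eps sig q mu a : R) (beta : R -> R) :
  0 < ga -> 0 < gs -> 0 < sig -> 0 <= mu -> 0 <= a ->
  gs * mu * eps * (mu ^ 4 - 2) <= ga * (eps - mu ^ 4) -> 0 < q * beta (mu * a) ->
  0 < rhs_s eps sig q beta a (mu * a) / gs - mu * (rhs_a eps sig a (mu * a) / ga).
Proof.
  intros Hga Hgs Hsig Hmu Ha Hgap Hbeta. unfold rhs_a, rhs_s.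
  rewrite !signed_pow4_nonneg by (try apply Rmult_le_pos; assumption).
  match goal with |- 0 < ?e =>
    replace e with ((sig * a ^ 4 * (ga * (eps - mu ^ 4) - gs * mu * eps * (mu ^ 4 - 2))
                     + ga * (q * beta (mu * a))) / (ga * gs)) by (field; lra) end.
  apply Rdiv_lt_0_compat; [|nra].
  assert (0 <= sig * a ^ 4 * (ga * (eps - mu ^ 4) - gs * mu * eps * (mu ^ 4 - 2))).
  { apply Rmult_le_pos; [apply Rmult_le_pos; [lra | apply pow_le, Ha] | lra]. }
  nra.
Qed.

Lemma rhs_s_at_zero_pos (eps sig q a : R) (beta : R -> R) :
  a <= 0 -> eps * sig * a ^ 4 < q * beta 0 -> 0 < rhs_s eps sig q beta a 0.
Proof.
  intros Ha Hsmall. unfold rhs_s.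
  rewrite (signed_pow4_nonpos a Ha), Rabs_R0. lra.
Qed.

Lemma rhs_a_at_neg_pos (eps sig eta s : R) :
  0 < eps -> 0 < sig -> 0 < eta -> 0 <= s -> 0 < rhs_a eps sig (- eta) s.
Proof.
  intros Heps Hsig Heta Hs. unfold rhs_a.
  rewrite signed_pow4_nonneg by exact Hs. rewrite signed_pow4_nonpos by lra.
  replace ((- eta) ^ 4) with (eta ^ 4) by ring.
  pose proof (pow_le s 4 Hs). pose proof (pow_lt eta 4 Heta).
  assert (0 < eps * sig) by nra.
  nra.
Qed.

Section Sector.

Variables (ga gs eps sig q : R) (beta : R -> R) (Ta Ts : R -> R) (mu eta : R).
Hypotheses (hga : 0 < ga) (hgs : 0 < gs) (heps : 0 < eps) (hsig : 0 < sig)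
  (hbeta : forall T, 0 < q * beta T) (hmu : 0 < mu)
  (hgap : gs * mu * eps * (mu ^ 4 - 2) <= ga * (eps - mu ^ 4))
  (heta : 0 < eta) (heta4 : eps * sig * eta ^ 4 < q * beta 0).

Let dA (u : R) : R := rhs_a eps sig (Ta u) (Ts u) / ga.
Let dS (u : R) : R := rhs_s eps sig q beta (Ta u) (Ts u) / gs.

Definition sector_barriers : list ((R -> R) * (R -> R)) :=
  [(fun u => Ts u - mu * Ta u, fun u => dS u - mu * dA u);
   (Ts, dS);
   (fun u => Ta u + eta, dA)].

Lemma sector_barriers_inward (u : R) :
  (forall g dg, In (g, dg) sector_barriers -> 0 <= g u) ->
  forall g dg, In (g, dg) sector_barriers -> g u = 0 -> 0 < dg u.
Proof.
  intros Hnonneg g dg Hin Hzero.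
  assert (h1 : 0 <= Ts u - mu * Ta u) by exact (Hnonneg _ _ (or_introl eq_refl)).
  assert (h2 : 0 <= Ts u) by exact (Hnonneg _ _ (or_intror (or_introl eq_refl))).
  assert (h3 : 0 <= Ta u + eta)
    by exact (Hnonneg _ _ (or_intror (or_intror (or_introl eq_refl)))).
  destruct Hin as [H | [H | [H | []]]]; injection H as <- <-.
  - assert (hs : Ts u = mu * Ta u) by lra.
    unfold dS, dA. rewrite hs.
    apply rhs_ray_pos; try lra; [nra | apply hbeta].
  - assert (ha : Ta u <= 0) by nra.
    unfold dS. rewrite Hzero.
    apply Rdiv_lt_0_compat; [|exact hgs].
    apply rhs_s_at_zero_pos; [exact ha|].
    assert (Ta u ^ 4 <= eta ^ 4) by (apply pow_maj_Rabs, Rabs_le; lra).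
    assert (0 < eps * sig) by nra.
    nra.
  - unfold dA. replace (Ta u) with (- eta) by lra.
    apply Rdiv_lt_0_compat; [|exact hga].
    apply rhs_a_at_neg_pos; lra.
Qed.

Lemma sector_invariant (t0 t1 : R) :
  (forall u, t0 < u <= t1 -> is_derive Ta u (dA u) /\ is_derive Ts u (dS u)) ->
  filterlim Ta (at_right t0) (locally (Ta t0)) ->
  filterlim Ts (at_right t0) (locally (Ts t0)) ->
  0 <= Ta t0 -> mu * Ta t0 < Ts t0 -> t0 <= t1 ->
  mu * Ta t1 < Ts t1.
Proof.
  intros Hder HlimA HlimS Ha0 Hs0 Ht.
  enough (0 < Ts t1 - mu * Ta t1) by lra.
  refine (barrier_invariance sector_barriers t0 t1 _ _ _ t1 (conj Ht (Rle_refl t1))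
            (fun u => Ts u - mu * Ta u) (fun u => dS u - mu * dA u) (or_introl eq_refl)).
  - intros g dg Hin. destruct Hin as [H | [H | [H | []]]]; injection H as <- <-; split.
    + lra.
    + apply filterlim_Rminus_scal; assumption.
    + nra.
    + exact HlimS.
    + lra.
    + apply filterlim_Rplus; [exact HlimA | apply filterlim_const].
  - intros g dg u Hin Hu. destruct (Hder u Hu) as [HdA HdS].
    destruct Hin as [H | [H | [H | []]]]; injection H as <- <-.
    + apply (is_derive_minus Ts (fun u => mu * Ta u)); [exact HdS | apply is_derive_scal, HdA].
    + exact HdS.
    + replace (dA u) with (dA u + 0) by ring.
      apply (is_derive_plus Ta (fun _ => eta)); [exact HdA|].
      exact (is_derive_const (K := R_AbsRing) (V := R_NormedModule) eta u).
  - intros u _. apply sector_barriers_inward.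
Qed.

End Sector.

Lemma in_E_above_ray (eps sig q : R) (beta : R -> R) (a s : R) :
  0 < eps -> 0 < sig -> in_E eps sig q beta a s -> Rpower 2 (/ 4) * a < s.
Proof.
  intros Heps Hsig [_ [Hs [_ HE]]].
  apply (pow_lt_reg_l _ _ 4 Hs).
  rewrite Rpow_mult_distr, Rpower_inv4_pow4 by lra.
  assert (0 < eps * sig) by nra.
  nra.
Qed.

Lemma solution_right_continuous (ga gs eps sig q : R) (beta : R -> R) (Ta0 Ts0 : R)
    (tau : Rbar) (Ta Ts : R -> R) (t0 : R) :
  is_solution ga gs eps sig q beta Ta0 Ts0 tau Ta Ts -> 0 <= t0 -> Rbar_lt t0 tau ->
  filterlim Ta (at_right t0) (locally (Ta t0)) /\ filterlim Ts (at_right t0) (locally (Ts t0)).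
Proof.
  intros [_ [_ [HlimA [HlimS Hder]]]] [Hpos | <-] Htau; [|split; assumption].
  destruct (Hder t0 Hpos Htau) as [HdA HdS].
  split; eapply is_derive_continuous_within; eassumption.
Qed.

Theorem lemmaA1
  (ga gs sig q eps Tm Tp bm bp Ta0 Ts0 : R)
  (hga : 0 < ga) (hgs : 0 < gs) (hsig : 0 < sig) (hq : 0 < q) (heps : 2 < eps)
  (hT0 : 0 < Tm) (hT : Tm < Tp) (hb0 : 0 < bm) (hb : bm < bp)
  (hTa0 : 0 <= Ta0) (hTs0 : 0 <= Ts0)
  (tau : Rbar) (Ta Ts : R -> R)
  (hsol : is_maximal_solution ga gs eps sig q (coalbedo Tm Tp bm bp)
            Ta0 Ts0 tau Ta Ts)
  (mus : R)
  (hmus1 : Rpower 2 (/ 4) < mus) (hmus2 : mus < Rpower eps (/ 4))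
  (hmus : gs / ga * mus = (eps - mus ^ 4) / (eps * (mus ^ 4 - 2)))
  (tau0 : R) (htau0 : 0 <= tau0) (htau0' : Rbar_lt tau0 tau)
  (hE : in_E eps sig q (coalbedo Tm Tp bm bp) (Ta tau0) (Ts tau0)) :
  exists mu : R, Rpower 2 (/ 4) < mu /\ mu < mus /\
    (forall t : R, tau0 <= t -> Rbar_lt t tau -> Ts t >= mu * Ta t).
Proof.
  destruct hsol as [_ [hsol _]].
  destruct (solution_right_continuous _ _ _ _ _ _ _ _ _ _ _ _ hsol htau0 htau0')
    as [hlimA hlimS].
  assert (hray0 := in_E_above_ray eps sig _ _ _ _ ltac:(lra) hsig hE).
  destruct (exists_slope_between _ mus (Ta tau0) (Ts tau0) (proj1 hE) hray0 hmus1)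
    as [mu [[hrmu hmumus] hray]].
  exists mu. split; [exact hrmu | split; [exact hmumus |]].
  assert (hr : 0 < Rpower 2 (/ 4)) by apply exp_pos.
  assert (hmu4 : 2 < mu ^ 4).
  { rewrite <- (Rpower_inv4_pow4 2) by lra. apply pow_lt_compat_l; [lra | lia]. }
  assert (hbeta : forall T, 0 < q * coalbedo Tm Tp bm bp T).
  { intros T. pose proof (coalbedo_ge_min Tm Tp bm bp T hT ltac:(lra)). nra. }
  destruct (exists_small_pow4 (eps * sig) _ ltac:(nra) (hbeta 0)) as [eta [heta heta4]].
  intros t ht htau. apply Rle_ge, Rlt_le.
  apply (sector_invariant ga gs eps sig q (coalbedo Tm Tp bm bp) Ta Ts mu eta)
    with (t0 := tau0); try assumption; try lra.
  - apply Rlt_le, (mu_star_gap ga gs eps mu mus); try lra; assumption.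
  - intros u Hu. destruct hsol as [_ [_ [_ [_ hder]]]].
    apply hder; [lra|].
    apply (Rbar_le_lt_trans u t tau); [simpl; lra | exact htau].
  - exact (proj1 hE).
Qed.
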